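(* Let $c\ge2$ and let $F$ be a standard $c$-coloring. Let $X\in\mathcal X_F$ and let $c_1$ be the color of the monochromatic clique $F[X]$. Then for every $y\in V(F)\setminus X$ there exists at most one edge $e_0\in y\ast X$ with $F(e_0)=c_1$, and there is a color $c_2\neq c_1$ such that $F(e)=c_2$ for all $e\in (y\ast X)\setminus\{e_0\}$ (where $\{e_0\}$ is empty if no such edge exists).
   Context: A $c$-coloring $F$ is a map from the $2$-subsets of a finite set $V(F)$ to $[c]$. $F$ is standard if it contains no induced copy of any coloring in $\hat K_{3,1}$ or $\hat K_{3,3}$, where: $\hat K_{3,1}$ is the family of $4$-vertex colorings consisting of a monochromatic triangle of color $a$ plus a vertex joined to it by either (two edges of color $a$ and one of color $b\ne a$), or (three edges of three distinct colors, one being $a$), or (two edges of color $b$ and one of color $d$, with $a,b,d$ distinct); $\hat K_{3,3}$ is the family of $6$-vertex colorings consisting of two disjoint triangles monochromatic in colors $a$ and $b$ with all nine edges between them of color $d$, $a,b,d$ distinct. $\mathcal X_F$ is the set of all inclusion-maximal vertex sets $X$ of size at least $\max(c+1,6)$ such that all pairs inside $X$ have the same color. For disjoint sets $S_1,S_2$, $S_1\ast S_2$ is the set of pairs $\{v_1,v_2\}$ with $v_i\in S_i$, and $y\ast S=\{y\}\ast S$. *)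

From mathcomp Require Import all_boot.
Set Implicit Arguments. Unset Strict Implicit. Unset Printing Implicit Defensive.

(* A c-coloring on the finite vertex type V: a map from subsets of V to
   colors 'I_c (colors [c] = {1..c} renumbered as {0..c-1}); only its values
   on 2-subsets [set x; y] (x != y) are meaningful. *)
Definition coloring (V : finType) (c : nat) := {set V} -> 'I_c.

Section Defs.
Variables (V : finType) (c : nat) (F : coloring V c).

Definition col (x y : V) : 'I_c := F [set x; y].

(* Colors (p, q, r) of the three edges from the extra vertex to a
   monochromatic triangle of color a, where r is the "odd one out":
   pattern (i) two edges of color a and one of color b != a, or
   pattern (iii) two of color b and one of color d, a,b,d distinct. *)
Definition K31_pat_odd (a p q r : 'I_c) : bool :=
  [&& p == a, q == a & r != a] ||
  [&& p != a, p == q, r != a & r != p].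

Definition K31_pat_rainbow (a p q r : 'I_c) : bool :=
  [&& p != q, q != r, p != r & (a \in [:: p; q; r])].

Definition K31_pat (a p q r : 'I_c) : bool :=
  [|| K31_pat_odd a p q r, K31_pat_odd a q r p, K31_pat_odd a r p q
    | K31_pat_rainbow a p q r].

Definition has_K31 : Prop :=
  exists (t1 t2 t3 v : V) (a : 'I_c),
    uniq [:: t1; t2; t3; v] /\
    col t1 t2 = a /\ col t2 t3 = a /\ col t1 t3 = a /\
    K31_pat a (col v t1) (col v t2) (col v t3).

Definition has_K33 : Prop :=
  exists (u1 u2 u3 w1 w2 w3 : V) (a b d : 'I_c),
    uniq [:: u1; u2; u3; w1; w2; w3] /\
    uniq [:: a; b; d] /\
    col u1 u2 = a /\ col u2 u3 = a /\ col u1 u3 = a /\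
    col w1 w2 = b /\ col w2 w3 = b /\ col w1 w3 = b /\
    (forall u w, u \in [:: u1; u2; u3] -> w \in [:: w1; w2; w3] -> col u w = d).

Definition standard : Prop := ~ has_K31 /\ ~ has_K33.

Definition mono (X : {set V}) : Prop :=
  forall x y z w, x \in X -> y \in X -> z \in X -> w \in X ->
    x != y -> z != w -> col x y = col z w.

Definition in_XF (X : {set V}) : Prop :=
  [/\ maxn c.+1 6 <= #|X|, mono X &
      forall Y : {set V}, X \proper Y -> maxn c.+1 6 <= #|Y| -> ~ mono Y].

End Defs.

From mathcomp Require Import all_boot.

(* Let y lie outside the maximal c1-clique X.  Any three vertices of X form a
   c1-triangle, so the colors from y to them must avoid every \hat K_{3,1}
   pattern.  Two c1-edges from y then force all edges from y to X to have color
   c1, and y |: X would be a larger monochromatic set.  Two non-c1 edges of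
   different colors force all colors from y to X to be pairwise distinct, which
   is impossible since #|X| > c. *)

Set Implicit Arguments.
Unset Strict Implicit.
Unset Printing Implicit Defensive.

Lemma K31_pat_aaar c (a r : 'I_c) : r != a -> K31_pat a a a r.
Proof. by move=> ra; rewrite /K31_pat /K31_pat_odd eqxx ra. Qed.

Lemma K31_pat_prr c (a p r : 'I_c) :
  p != a -> r != a -> r != p -> K31_pat a p r r.
Proof.
move=> pa ra rp.
by rewrite /K31_pat /K31_pat_odd pa ra rp eqxx /= (eq_sym p r) rp !orbT.
Qed.

Lemma not_K31_pat_third c (a p q r : 'I_c) :
  p != a -> q != a -> p != q -> ~~ K31_pat a p q r -> (r != a) && (r != p).
Proof.
move=> pa qa pq; apply: contraR; rewrite negb_and !negbK => /orP[/eqP->|/eqP->].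
  by rewrite /K31_pat /K31_pat_rainbow !inE eqxx pq qa pa !orbT.
by rewrite /K31_pat /K31_pat_odd (eq_sym q p) pq pa qa eqxx !orbT.
Qed.

Lemma exists_neq_ord c (a : 'I_c) : 1 < c -> exists b : 'I_c, b != a.
Proof.
move=> c_gt1; pose b0 := Ordinal (ltnW c_gt1).
have [e|] := eqVneq b0 a; last by exists b0.
by exists (Ordinal c_gt1); rewrite -e; apply/eqP => /(congr1 val).
Qed.

Section Star.

Variables (V : finType) (c : nat) (F : coloring V c).

Lemma colC (u v : V) : col F u v = col F v u.
Proof. by rewrite /col setUC. Qed.

Variables (X : {set V}) (c1 : 'I_c) (y : V).
Hypothesis noK31 : ~ has_K31 F.
Hypothesis colX : forall x x', x \in X -> x' \in X -> x != x' -> col F x x' = c1.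
Hypothesis yNX : y \notin X.

Lemma star_not_K31_pat t1 t2 t3 :
  t1 \in X -> t2 \in X -> t3 \in X -> t1 != t2 -> t2 != t3 -> t1 != t3 ->
  ~~ K31_pat c1 (col F y t1) (col F y t2) (col F y t3).
Proof.
move=> t1X t2X t3X t12 t23 t13; apply/negP => pat; apply: noK31.
have neq_y t : t \in X -> t != y by move=> tX; apply: contraNneq yNX => <-.
exists t1, t2, t3, y, c1; split.
  by rewrite /= !inE !negb_or t12 t13 t23 !neq_y.
by do !split => //; apply: colX.
Qed.

Lemma star_two_c1 x x' : x \in X -> x' \in X -> x != x' ->
  col F y x = c1 -> col F y x' = c1 -> forall z, z \in X -> col F y z = c1.
Proof.
move=> xX x'X xx' yx yx' z zX.
have [->//|zx] := eqVneq z x; have [->//|zx'] := eqVneq z x'.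
have x'z : x' != z by rewrite eq_sym.
have xz : x != z by rewrite eq_sym.
apply/eqP; apply: contraNT (star_not_K31_pat xX x'X zX xx' x'z xz) => yz.
by rewrite yx yx' K31_pat_aaar.
Qed.

Lemma mono_setU1 : (forall z, z \in X -> col F y z = c1) -> mono F (y |: X).
Proof.
move=> yX.
have colYX s t : s \in y |: X -> t \in y |: X -> s != t -> col F s t = c1.
  move=> /setU1P[->|sX] /setU1P[->|tX] st.
  - by rewrite eqxx in st.
  - exact: yX.
  - by rewrite colC yX.
  - exact: colX.
by move=> u v w z uY vY wY zY uv wz; rewrite !colYX.
Qed.

Lemma star_off_c1 x1 x z : x1 \in X -> x \in X -> z \in X -> z != x1 ->
  col F y x1 != c1 -> col F y x != c1 -> col F y x != col F y x1 ->
  (col F y z != c1) && (col F y z != col F y x1).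
Proof.
move=> x1X xX zX zx1 yx1 yx yxx1.
have [->|zx] := eqVneq z x; first by rewrite yx yxx1.
apply: (not_K31_pat_third yx1 yx); first by rewrite eq_sym.
have x1x : x1 != x by apply: contraNneq yxx1 => ->.
by apply: star_not_K31_pat; rewrite // eq_sym.
Qed.

(* Three vertices of X with y-colors p, r, r (p, r and c1 distinct) would give
   pattern (iii) of \hat K_{3,1}. *)
Lemma star_injective x1 x : x1 \in X -> x \in X ->
  col F y x1 != c1 -> col F y x != c1 -> col F y x != col F y x1 ->
  {in X &, injective (col F y)}.
Proof.
move=> x1X xX yx1 yx yxx1 u v uX vX yuv; apply/eqP/negPn/negP => uv.
have off z : z \in X -> z != x1 ->
    (col F y z != c1) && (col F y z != col F y x1).
  by move=> zX zx1; apply: (star_off_c1 x1X xX).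
have [ux1|ux1] := eqVneq u x1.
  subst u; rewrite eq_sym in uv.
  by have /andP[_] := off v vX uv; rewrite -yuv eqxx.
have [vx1|vx1] := eqVneq v x1.
  by subst v; have /andP[_] := off u uX ux1; rewrite yuv eqxx.
have /andP[yv1 yvx1] := off v vX vx1.
have := star_not_K31_pat x1X uX vX; rewrite yuv K31_pat_prr //.
by rewrite !(eq_sym x1) ux1 vx1 uv => /(_ isT isT isT).
Qed.

End Star.

Theorem claim5p3 (V : finType) (c : nat) (F : coloring V c) (X : {set V})
    (c1 : 'I_c) :
  2 <= c -> standard F -> in_XF F X ->
  (forall x x', x \in X -> x' \in X -> x != x' -> col F x x' = c1) ->
  forall y, y \notin X ->
    (forall x x', x \in X -> x' \in X ->
        col F y x = c1 -> col F y x' = c1 -> x = x') /\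
    (exists c2 : 'I_c, c2 != c1 /\
        forall x, x \in X -> col F y x != c1 -> col F y x = c2).
Proof.
move=> c_gt1 [noK31 _] [X_big _ X_max] colX y yNX.
have X_gt_c : c < #|X| by apply: leq_trans X_big; apply: leq_maxl.
split.
  move=> x x' xX x'X yx yx'; apply/eqP/negPn/negP => xx'.
  apply: (X_max (y |: X)).
  - by apply: properUr; rewrite sub1set.
  - by apply: leq_trans X_big (subset_leq_card (subsetUr _ _)).
  - exact/(mono_setU1 colX)/(star_two_c1 noK31 colX yNX xX x'X xx').
case: (pickP [pred x in X | col F y x != c1]) => [x1 /andP[x1X yx1]|none].
  exists (col F y x1); split => // x xX yx; apply/eqP/negPn/negP => yxx1.
  have inj := star_injective noK31 colX yNX x1X xX yx1 yx yxx1.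
  suff : #|X| <= c by rewrite leqNgt X_gt_c.
  by rewrite -(card_in_imset inj); apply: leq_trans (max_card _) _; rewrite card_ord.
have [c2 c2c1] := exists_neq_ord c1 c_gt1.
by exists c2; split => // x xX yx; move: (none x); rewrite /= xX yx.
Qed.
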